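(* Let $n\in\mathbb N$, let $\lambda$ be an eigenvalue of $\mathfrak P^{(n)}_3+\mathfrak P^{(n)}_4$, and let $e\in\mathbb R^n$ be a corresponding unit eigenvector. (i) If $\lambda\ne1-\frac1n$, then $\langle e,\mathfrak P^{(n)}_1e\rangle=\langle e,\mathfrak P^{(n)}_2e\rangle=1-\frac1{2n}-\frac\lambda2$. (ii) If $\lambda=1-\frac1n$, then $\langle e,\mathfrak P^{(n)}_1e\rangle=0$ and $\langle e,\mathfrak P^{(n)}_2e\rangle=1$ when $n$ is even, while $\langle e,\mathfrak P^{(n)}_1e\rangle=1$ and $\langle e,\mathfrak P^{(n)}_2e\rangle=0$ when $n$ is odd.
   Context: For $n\in\mathbb N$, $\mathfrak P^{(n)}_1,\dots,\mathfrak P^{(n)}_4\in M_n(\mathbb R)$ denote orthogonal projections (real symmetric idempotent matrices) such that (i) $\mathfrak P^{(n)}_1+\dots+\mathfrak P^{(n)}_4=(2-\frac1n)I_n$; (ii) $\operatorname{rk}\mathfrak P^{(n)}_1=\lfloor\frac n2\rfloor-(-1)^n$ and $\operatorname{rk}\mathfrak P^{(n)}_i=\lfloor\frac n2\rfloor$ for $i=2,3,4$; (iii) the only subspaces of $\mathbb C^n$ invariant under all four matrices are $0$ and $\mathbb C^n$. Such quadruples exist for every $n$, and any two of them are simultaneously unitarily equivalent; moreover, any quadruple of orthogonal projections on a Hilbert space summing to $(2-\frac1n)I$ with no nontrivial common invariant closed subspace is unitarily equivalent to one of the four cyclic shifts $(\mathfrak P^{(n)}_{\sigma(1)},\dots,\mathfrak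 P^{(n)}_{\sigma(4)})$, $\sigma$ a power of the cycle $(1\,2\,3\,4)$, and these four are pairwise inequivalent. *)

From HB Require Import structures.
From mathcomp Require Import all_boot all_order all_algebra.
From mathcomp Require Import reals.
From mathcomp Require Export complex.
Set Implicit Arguments. Unset Strict Implicit. Unset Printing Implicit Defensive.
Import Order.TTheory GRing.Theory Num.Theory.
Local Open Scope ring_scope.

Definition orth_proj (R : realType) (n : nat) (P : 'M[R]_n) : Prop :=
  P^T = P /\ P *m P = P.

Definition complexify (R : realType) (n : nat) (A : 'M[R]_n) : 'M[R[i]]_n :=
  map_mx (real_complex R) A.

(* The subspace of C^n spanned by the rows of U (as column vectors, i.e. the
   column space of U^T) is invariant under the linear map x |-> A x
   (A acting on column vectors). *)
Definition cinvariant (R : realType) (n : nat) (U : 'M[R[i]]_n) (A : 'M[R]_n) : bool :=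
  (U *m (complexify A)^T <= U)%MS.

Definition qform (R : realType) (n : nat) (x : 'cV[R]_n) (A : 'M[R]_n) (y : 'cV[R]_n) : R :=
  (x^T *m A *m y) 0 0.

Definition frakP_quadruple (R : realType) (n : nat) (P1 P2 P3 P4 : 'M[R]_n) : Prop :=
  [/\ [/\ orth_proj P1, orth_proj P2, orth_proj P3 & orth_proj P4],
      P1 + P2 + P3 + P4 = (2 - (n%:R)^-1) %:M,
      [/\ \rank P1 = (if odd n then n./2 + 1 else n./2 - 1)%N,
          \rank P2 = n./2, \rank P3 = n./2 & \rank P4 = n./2]
    & forall U : 'M[R[i]]_n,
        cinvariant U P1 -> cinvariant U P2 -> cinvariant U P3 -> cinvariant U P4 ->
        (U == 0) || row_full U].

From HB Require Import structures.
From mathcomp Require Import all_boot all_order all_algebra.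
From mathcomp Require Import reals complex.
From mathcomp Require Import ring lra.
Set Implicit Arguments. Unset Strict Implicit. Unset Printing Implicit Defensive.
Import Order.TTheory GRing.Theory Num.Theory.
Local Open Scope ring_scope.

(* Let A := P1 + P2 and B := P3 + P4 = g - A with g := 2 - 1/n, so an
   eigenvector e of B for lambda is an eigenvector of A for a := g - lambda.

   (i) For two orthogonal projections P, Q and (P + Q) v = a v with a <> 1,
   the vector v has equal Rayleigh quotients for P and Q, hence both equal
   a/2; with a = g - lambda this is the announced value.

   (ii) If lambda = 1 - 1/n then A e = e.  The reflections P1 - P2 and
   P3 - P4 each map an eigenvector of A (resp. of B) for an eigenvalue c in
   (0, 2) to a nonzero eigenvector for 2 - c.  Starting from a nonzero vector
   x with A x = x and alternating the two reflections gives n eigenvectors of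
   A for n distinct eigenvalues, hence an orthogonal basis of R^n.  Computing
   tr P1 = rank P1 in this basis expresses rank P1 through the Rayleigh
   quotient of x for P1 alone.  Taking x := P1 e (a fixed vector of P1) when
   n is even and x := P2 e (a vector killed by P1) when n is odd contradicts
   the prescribed rank of P1 unless x = 0, which yields (ii). *)

Section IdempotentTrace.
Variable F : fieldType.

Lemma mxtrace_pid_mx n r : (r <= n)%N -> \tr (pid_mx r : 'M[F]_n) = r%:R.
Proof.
move=> le_rn; rewrite /mxtrace.
under eq_bigr do rewrite mxE eqxx /=.
rewrite -(big_mkord xpredT (fun i => (i < r)%:R)) (big_cat_nat (leq0n r) le_rn) /=.
rewrite [X in _ + X]big1_seq ?addr0; last first.
  by move=> i; rewrite mem_index_iota => /andP[_ /andP[le_ri _]]; rewrite ltnNge le_ri.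
rewrite big_nat_cond (eq_bigr (fun _ => 1)); last by move=> i /andP[/andP[_ ->] _].
by rewrite -big_nat_cond sumr_const_nat subn0.
Qed.

Lemma mxtrace_idempotent n (P : 'M[F]_n) : P *m P = P -> \tr P = (\rank P)%:R.
Proof.
move=> idP; set C := col_ebase P; set U := row_ebase P.
set p : 'M[F]_n := pid_mx (\rank P).
have defP : P = C *m p *m U by rewrite mulmx_ebase.
have p_UC_p : p *m (U *m C) *m p = p.
  have : C *m (p *m (U *m C) *m p) *m U = C *m p *m U.
    by rewrite -defP -[in RHS]idP [in RHS]defP !mulmxA.
  rewrite -!mulmxA => /(congr1 (mulmx (invmx C))).
  rewrite !mulKmx ?col_ebase_unit // !mulmxA => /(congr1 (mulmx^~ (invmx U))).
  by rewrite !mulmxK ?row_ebase_unit // !mulmxA.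
have pp : p *m p = p by apply: pid_mx_id; apply: rank_leq_row.
rewrite {1}defP -mulmxA mxtrace_mulC -mulmxA -{1}pp.
by rewrite -mulmxA mxtrace_mulC p_UC_p mxtrace_pid_mx // rank_leq_row.
Qed.

End IdempotentTrace.

Section InnerProduct.
Variable R : realFieldType.

Definition dot n (u w : 'cV[R]_n) : R := (u^T *m w) 0 0.

Lemma dotE n (u w : 'cV[R]_n) : dot u w = \sum_k u k 0 * w k 0.
Proof. by rewrite /dot mxE; apply: eq_bigr => k _; rewrite [u^T _ _]mxE. Qed.

Lemma dotC n (u w : 'cV[R]_n) : dot u w = dot w u.
Proof. by rewrite /dot -[in RHS](trmxK u) -trmx_mul [RHS]mxE. Qed.

Lemma dot_mulmxl n (M : 'M[R]_n) (u w : 'cV[R]_n) : dot (M *m u) w = dot u (M^T *m w).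
Proof. by rewrite /dot trmx_mul mulmxA. Qed.

Lemma dotZr n (u w : 'cV[R]_n) c : dot u (c *: w) = c * dot u w.
Proof. by rewrite /dot -scalemxAr mxE. Qed.

Lemma dotZl n (u w : 'cV[R]_n) c : dot (c *: u) w = c * dot u w.
Proof. by rewrite dotC dotZr dotC. Qed.

Lemma dotDr n (u w1 w2 : 'cV[R]_n) : dot u (w1 + w2) = dot u w1 + dot u w2.
Proof. by rewrite /dot mulmxDr mxE. Qed.

Lemma dot_proj n (P : 'M[R]_n) (v : 'cV[R]_n) :
  P^T = P -> P *m P = P -> dot (P *m v) (P *m v) = dot v (P *m v).
Proof. by move=> symP idP; rewrite dot_mulmxl symP mulmxA idP. Qed.

Lemma eigenvector_orthogonal n (S : 'M[R]_n) (u w : 'cV[R]_n) a b :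
  S^T = S -> S *m u = a *: u -> S *m w = b *: w -> a != b -> dot u w = 0.
Proof.
move=> symS Su Sw neq_ab.
have : a * dot u w = b * dot u w by rewrite -dotZl -Su dot_mulmxl symS Sw dotZr.
by move/eqP; rewrite -subr_eq0 -mulrBl mulf_eq0 subr_eq0 (negPf neq_ab) => /eqP.
Qed.

Lemma mxtrace_orthogonal_basis n (v : 'I_n -> 'cV[R]_n) (M : 'M[R]_n) :
  (forall i j, i != j -> dot (v i) (v j) = 0) ->
  (forall i, dot (v i) (v i) != 0) ->
  \tr M = \sum_i dot (v i) (M *m v i) / dot (v i) (v i).
Proof.
move=> orth_v nz_v.
pose V : 'M[R]_n := \matrix_(i, j) v j i 0.
pose L : 'M[R]_n := \matrix_(i, j) (v i j 0 / dot (v i) (v i)).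
have LV : L *m V = 1%:M.
  apply/matrixP => i j; rewrite !mxE.
  under eq_bigr do rewrite !mxE mulrAC.
  rewrite -mulr_suml -dotE.
  by case: (eqVneq i j) => [<-|neq_ij]; [rewrite mulfV | rewrite orth_v // mul0r].
rewrite -{1}[M]mulmx1 -(mulmx1C LV) mulmxA mxtrace_mulC /mxtrace.
apply: eq_bigr => i _; rewrite mxE dotE mulr_suml; apply: eq_bigr => k _.
rewrite [L i k]mxE [(M *m V) k i]mxE [(M *m v i) k 0]mxE mulrAC.
by congr (_ * _ / _); apply: eq_bigr => l _; rewrite mxE.
Qed.

End InnerProduct.

Lemma eigen_scalar_sub (K : pzRingType) n (M N : 'M[K]_n) c b (v : 'cV[K]_n) :
  M = c%:M - N -> N *m v = b *: v -> M *m v = (c - b) *: v.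
Proof. by move=> -> Nv; rewrite mulmxBl mul_scalar_mx Nv -scalerBl. Qed.

Lemma idempotent_cross_eigen (K : comPzRingType) n (P Q : 'M[K]_n) a (v : 'cV[K]_n) :
  P *m P = P -> (P + Q) *m v = a *: v -> P *m (Q *m v) = (a - 1) *: (P *m v).
Proof.
move=> idP Av; have := congr1 (mulmx P) Av.
rewrite mulmxDl mulmxDr !mulmxA idP -scalemxAr => PAv.
by rewrite -[P *m Q *m v](addKr (P *m v)) PAv scalerBl scale1r addrC.
Qed.

Section TwoProjections.
Variable R : realFieldType.
Variables (n : nat) (P Q : 'M[R]_n).
Hypotheses (symP : P^T = P) (idP : P *m P = P) (symQ : Q^T = Q) (idQ : Q *m Q = Q).
Variables (a : R) (v : 'cV[R]_n).
Hypothesis (eig_v : (P + Q) *m v = a *: v).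

Let PQv : P *m (Q *m v) = (a - 1) *: (P *m v).
Proof. exact: idempotent_cross_eigen. Qed.

Let QPv : Q *m (P *m v) = (a - 1) *: (Q *m v).
Proof. by apply: idempotent_cross_eigen; rewrite // addrC. Qed.

Lemma reflection_eigen : (P + Q) *m ((P - Q) *m v) = (2 - a) *: ((P - Q) *m v).
Proof.
rewrite mulmxBl mulmxDl !mulmxBr PQv QPv !mulmxA idP idQ.
by move: (P *m v) (Q *m v) => x y; apply/matrixP => i j; rewrite !mxE; ring.
Qed.

Lemma reflection_norm : dot ((P - Q) *m v) ((P - Q) *m v) = a * (2 - a) * dot v v.
Proof.
have Pv : P *m v = a *: v - Q *m v by rewrite -eig_v mulmxDl addrK.
have refl_sq : (P - Q) *m ((P - Q) *m v) = (a * (2 - a)) *: v.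
  rewrite !mulmxBl !mulmxBr PQv QPv !mulmxA idP idQ Pv.
  by move: (Q *m v) => y; apply/matrixP => i j; rewrite !mxE; ring.
by rewrite dot_mulmxl linearB /= symP symQ refl_sq dotZr.
Qed.

Lemma rayleigh_half : a != 1 -> dot v (P *m v) = a / 2 * dot v v.
Proof.
move=> a_neq1.
have sym_cross : dot v (P *m (Q *m v)) = dot v (Q *m (P *m v)).
  by rewrite -{1}symP -dot_mulmxl dotC dot_mulmxl symQ.
rewrite PQv QPv !dotZr in sym_cross.
have PvQv : dot v (P *m v) = dot v (Q *m v).
  by apply: (mulfI (_ : a - 1 != 0)); rewrite ?subr_eq0.
have : dot v (P *m v) + dot v (Q *m v) = a * dot v v.
  by rewrite -dotDr -mulmxDl eig_v dotZr.
rewrite -PvQv => sum2; rewrite mulrAC -sum2; lra.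
Qed.

End TwoProjections.

Section FourProjections.
Variable R : realFieldType.
Variables (n : nat) (P1 P2 P3 P4 : 'M[R]_n).
Hypotheses (sym1 : P1^T = P1) (id1 : P1 *m P1 = P1) (sym2 : P2^T = P2) (id2 : P2 *m P2 = P2)
  (sym3 : P3^T = P3) (id3 : P3 *m P3 = P3) (sym4 : P4^T = P4) (id4 : P4 *m P4 = P4).
Hypotheses (sum_P : P1 + P2 + P3 + P4 = (2 - (n%:R)^-1)%:M) (n_gt0 : (0 < n)%N).

Let g : R := 2 - (n%:R)^-1.

Let nR_neq0 : (n%:R : R) != 0.
Proof. by rewrite pnatr_eq0 -lt0n. Qed.

Let nR_gt0 : 0 < (n%:R : R).
Proof. by rewrite ltr0n. Qed.

Lemma P12_compl : P1 + P2 = g%:M - (P3 + P4).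
Proof. by rewrite /g -sum_P; apply/matrixP => i j; rewrite !mxE; ring. Qed.

Lemma P34_compl : P3 + P4 = g%:M - (P1 + P2).
Proof. by rewrite /g -sum_P; apply/matrixP => i j; rewrite !mxE; ring. Qed.

Fixpoint refl_chain (x : 'cV[R]_n) (k : nat) : 'cV[R]_n :=
  if k is k'.+1 then (if odd k' then P1 - P2 else P3 - P4) *m refl_chain x k' else x.

(* The eigenvalue of P1 + P2 at the k-th vector of the chain of a fixed vector. *)
Definition chain_eigenvalue (k : nat) : R :=
  if odd k then 1 - k.+1%:R / n%:R else 1 + k%:R / n%:R.

(* Each step of the chain is a reflection at an eigenvalue c = 1 - (k + 1)/n
   in (0, 1), so it keeps the vector nonzero and moves the eigenvalue. *)
Lemma refl_chain_eigen (x : 'cV[R]_n) :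
  (P1 + P2) *m x = x -> dot x x != 0 -> forall k, (k < n)%N ->
  (P1 + P2) *m refl_chain x k = chain_eigenvalue k *: refl_chain x k
  /\ dot (refl_chain x k) (refl_chain x k) != 0.
Proof.
move=> fix_x nz_x; elim=> [|k IHk] lt_kn.
  by rewrite /chain_eigenvalue /= mul0r addr0 scale1r.
have [eig_k nz_k] := IHk (ltnW lt_kn).
set c : R := 1 - k.+1%:R / n%:R.
have c_gt0 : 0 < c by rewrite subr_gt0 ltr_pdivrMr // mul1r ltr_nat.
have c_lt1 : c < 1 by rewrite gtrBl divr_gt0 ?ltr0n.
have nz_refl d : d != 0 -> c * (2 - c) * d != 0.
  by move=> nz_d; rewrite !mulf_neq0 // lt0r_neq0 //; lra.
rewrite /= /chain_eigenvalue /=; case: ifP eig_k => odd_k eig_k /=.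
- rewrite /chain_eigenvalue odd_k -/c in eig_k.
  rewrite (reflection_norm sym1 id1 sym2 id2 eig_k) nz_refl //.
  by rewrite (reflection_eigen id1 id2 eig_k) /c; split=> //; congr (_ *: _); ring.
- have eigB_k : (P3 + P4) *m refl_chain x k = c *: refl_chain x k.
    rewrite (eigen_scalar_sub P34_compl eig_k) /chain_eigenvalue odd_k /g /c.
    by congr (_ *: _); rewrite -natr1; field.
  rewrite (reflection_norm sym3 id3 sym4 id4 eigB_k) nz_refl //.
  rewrite (eigen_scalar_sub P12_compl (reflection_eigen id3 id4 eigB_k)) /g /c.
  by split=> //; congr (_ *: _); rewrite -!natr1; field.
Qed.

(* The eigenvalues along the chain are pairwise distinct: odd indices give
   eigenvalues below 1, even ones eigenvalues at least 1. *)
Lemma chain_eigenvalue_inj i j : chain_eigenvalue i = chain_eigenvalue j -> i = j.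
Proof.
have frac_ge0 k : 0 <= k%:R / n%:R :> R by rewrite divr_ge0 ?ler0n.
have frac_gt0 k : 0 < k.+1%:R / n%:R :> R by rewrite divr_gt0 ?ltr0n.
have frac_inj k l : k%:R / n%:R = l%:R / n%:R :> R -> k = l.
  by move/(mulIf (invr_neq0 nR_neq0))/eqP; rewrite eqr_nat => /eqP.
rewrite /chain_eigenvalue.
have := frac_ge0 i; have := frac_ge0 j; have := frac_gt0 i; have := frac_gt0 j.
case: (odd i); case: (odd j) => *.
- by have [] : i.+1 = j.+1 by apply: frac_inj; lra.
- by exfalso; lra.
- by exfalso; lra.
- by apply: frac_inj; lra.
Qed.

Lemma sum_chain_eigenvalue k :
  \sum_(i < k) chain_eigenvalue i = k%:R - (if odd k then 0 else k%:R / n%:R).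
Proof.
elim: k => [|k IHk]; first by rewrite big_ord0 /= mul0r subr0.
rewrite big_ord_recr /= IHk /chain_eigenvalue; case: (odd k); rewrite /= -?natr1; ring.
Qed.

(* Trace of P1 in the orthogonal eigenbasis given by the chain of a fixed
   vector x that is itself an eigenvector of P1 for mu: the first vector
   contributes mu, every other one half its eigenvalue (rayleigh_half). *)
Lemma trace_P1_chain (x : 'cV[R]_n) mu :
  (P1 + P2) *m x = x -> dot x x != 0 -> P1 *m x = mu *: x ->
  \tr P1 = mu + (n%:R - (if odd n then 0 else 1) - 1) / 2.
Proof.
move=> fix_x nz_x eig_x.
have chain_k (i : 'I_n) := refl_chain_eigen fix_x nz_x (ltn_ord i).
have symA : (P1 + P2)^T = P1 + P2 by rewrite linearD /= sym1 sym2.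
rewrite (@mxtrace_orthogonal_basis _ _ (fun i : 'I_n => refl_chain x i)); first last.
- by move=> i; exact: (chain_k i).2.
- move=> i j neq_ij; apply: (eigenvector_orthogonal symA (chain_k i).1 (chain_k j).1).
  apply: contra neq_ij => /eqP/chain_eigenvalue_inj eq_ij.
  by apply/eqP/val_inj.
pose i0 : 'I_n := Ordinal n_gt0.
have eigval0 : chain_eigenvalue 0 = 1 by rewrite /chain_eigenvalue /= mul0r addr0.
rewrite (bigD1 i0) //= eig_x dotZr mulfK //; congr (_ + _).
rewrite (eq_bigr (fun i : 'I_n => chain_eigenvalue i / 2)); last first.
  move=> i neq_i0; have [eig_i nz_i] := chain_k i.
  rewrite (rayleigh_half sym1 id1 sym2 id2 eig_i) ?mulfK //.
  apply: contra neq_i0 => /eqP eigval_i.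
  by apply/eqP/val_inj/chain_eigenvalue_inj; rewrite eigval_i /= eigval0.
have := sum_chain_eigenvalue n; rewrite (bigD1 i0) //= eigval0 -mulr_suml => sum_n.
have -> : \sum_(i < n | i != i0) chain_eigenvalue i
        = n%:R - (if odd n then 0 else n%:R / n%:R) - 1 by rewrite -sum_n; ring.
by case: (odd n); rewrite ?divff.
Qed.

Lemma fixed_vector_parts (e : 'cV[R]_n) : (P1 + P2) *m e = e ->
  [/\ (P1 + P2) *m (P1 *m e) = P1 *m e, P1 *m (P1 *m e) = 1 *: (P1 *m e),
      (P1 + P2) *m (P2 *m e) = P2 *m e & P1 *m (P2 *m e) = 0 *: (P2 *m e)].
Proof.
move=> fix_e; have eig_e : (P1 + P2) *m e = 1 *: e by rewrite scale1r.
have eig'_e : (P2 + P1) *m e = 1 *: e by rewrite addrC.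
have P2P1e : P2 *m (P1 *m e) = 0.
  by rewrite (idempotent_cross_eigen id2 eig'_e) subrr scale0r.
have P1P2e : P1 *m (P2 *m e) = 0.
  by rewrite (idempotent_cross_eigen id1 eig_e) subrr scale0r.
by rewrite !mulmxDl P2P1e P1P2e !mulmxA id1 id2 addr0 add0r scale1r scale0r.
Qed.

(* For even n the rank n/2 - 1 of P1 forces P1 to vanish on fixed vectors of
   P1 + P2: otherwise P1 e would give tr P1 = n/2. *)
Lemma fixed_rayleigh_P1_even (e : 'cV[R]_n) :
  ~~ odd n -> \rank P1 = (n./2 - 1)%N -> (P1 + P2) *m e = e -> dot e (P1 *m e) = 0.
Proof.
move=> even_n rank_P1 fix_e; have [fix1 eig1 _ _] := fixed_vector_parts fix_e.
apply/eqP/negPn/negP; rewrite -dot_proj // => nz_P1e.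
have := trace_P1_chain fix1 nz_P1e eig1.
have n_eq : n = (n./2 * 2)%N by rewrite -{1}(odd_double_half n) (negPf even_n) muln2.
have half_gt0 : (0 < n./2)%N by rewrite -double_gt0 -muln2 -n_eq.
rewrite mxtrace_idempotent // rank_P1 (negPf even_n) natrB // {2}n_eq natrM.
by move: (n./2%:R : R) => h; lra.
Qed.

(* For odd n the rank n/2 + 1 of P1 forces P2 to vanish on fixed vectors of
   P1 + P2: otherwise P2 e would give tr P1 = (n - 1)/2. *)
Lemma fixed_rayleigh_P2_odd (e : 'cV[R]_n) :
  odd n -> \rank P1 = (n./2 + 1)%N -> (P1 + P2) *m e = e -> dot e (P2 *m e) = 0.
Proof.
move=> odd_n rank_P1 fix_e; have [_ _ fix2 eig2] := fixed_vector_parts fix_e.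
apply/eqP/negPn/negP; rewrite -dot_proj // => nz_P2e.
have := trace_P1_chain fix2 nz_P2e eig2.
have n_eq : n = (n./2 * 2 + 1)%N by rewrite -{1}(odd_double_half n) odd_n muln2 addnC.
rewrite mxtrace_idempotent // rank_P1 odd_n {2}n_eq !natrD natrM.
by move: (n./2%:R : R) => h; lra.
Qed.

End FourProjections.

Theorem proposition4p5 (R : realType) (n : nat) (P1 P2 P3 P4 : 'M[R]_n)
  (lambda : R) (e : 'cV[R]_n) :
  (0 < n)%N ->
  frakP_quadruple P1 P2 P3 P4 ->
  (P3 + P4) *m e = lambda *: e ->
  (e^T *m e) 0 0 = 1 ->
  (lambda != 1 - (n%:R)^-1 ->
     qform e P1 e = 1 - (2 * n%:R)^-1 - lambda / 2 /\
     qform e P2 e = 1 - (2 * n%:R)^-1 - lambda / 2) /\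
  (lambda = 1 - (n%:R)^-1 ->
     (~~ odd n -> qform e P1 e = 0 /\ qform e P2 e = 1) /\
     (odd n -> qform e P1 e = 1 /\ qform e P2 e = 0)).
Proof.
move=> n_gt0 [[[sym1 id1] [sym2 id2] [sym3 id3] [sym4 id4]] sum_P [rank1 _ _ _] _] eig_e unit_e.
have qformE P : qform e P e = dot e (P *m e) by rewrite /qform /dot mulmxA.
have nR_neq0 : (n%:R : R) != 0 by rewrite pnatr_eq0 -lt0n.
have eigA_e := eigen_scalar_sub (P12_compl sum_P) eig_e.
rewrite !qformE; split=> [lambda_neq | lambda_eq].
-
  have a_neq1 : 2 - (n%:R)^-1 - lambda != 1.
    by apply: contra lambda_neq => /eqP ?; apply/eqP; lra.
  have eigA'_e : (P2 + P1) *m e = (2 - (n%:R)^-1 - lambda) *: e by rewrite addrC.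
  rewrite (rayleigh_half sym1 id1 sym2 id2 eigA_e a_neq1).
  rewrite (rayleigh_half sym2 id2 sym1 id1 eigA'_e a_neq1) (unit_e : dot e e = 1).
  by split; field.
-
  have fix_e : (P1 + P2) *m e = e.
    by rewrite eigA_e lambda_eq (_ : _ - _ = 1) ?scale1r //; ring.
  have sum_rayleigh : dot e (P1 *m e) + dot e (P2 *m e) = 1.
    by rewrite -dotDr -mulmxDl fix_e.
  split=> [even_n | odd_n]; rewrite ?(negPf even_n) ?odd_n in rank1.
  + have := fixed_rayleigh_P1_even sym1 id1 sym2 id2 sym3 id3 sym4 id4 sum_P n_gt0.
    by move/(_ e even_n rank1 fix_e) => ray1; split=> //; lra.
  + have := fixed_rayleigh_P2_odd sym1 id1 sym2 id2 sym3 id3 sym4 id4 sum_P n_gt0.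
    by move/(_ e odd_n rank1 fix_e) => ray2; split=> //; lra.
Qed.
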